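(* Let $X$ and $Y$ be sup-lattices. Then $(X,Y)$ is a Morita pair between some m-regular quantales (i.e. there exist m-regular quantales $A$, $B$ and pairings making $(A,B,X,Y,(-,-),[-,-])$ a Morita context) if and only if there exist surjective sup-preserving maps $p: X\otimes Y\otimes X\to X$ and $q: Y\otimes X\otimes Y\to Y$ such that, for all $x_1,x_2,x_3\in X$ and $y_1,y_2,y_3\in Y$: 1. $p(p(x_1\otimes y_1\otimes x_2)\otimes y_2\otimes x_3)=p(x_1\otimes q(y_1\otimes x_2\otimes y_2)\otimes x_3)=p(x_1\otimes y_1\otimes p(x_2\otimes y_2\otimes x_3))$; 2. $q(q(y_1\otimes x_1\otimes y_2)\otimes x_2\otimes y_3)=q(y_1\otimes p(x_1\otimes y_2\otimes x_2)\otimes y_3)=q(y_1\otimes x_1\otimes q(y_2\otimes x_2\otimes y_3))$; 3. if $p(u\otimes v\otimes x_1)=p(u\otimes v\otimes x_2)$ for all $u\in X$, $v\in Y$, then $x_1=x_2$; 4. if $p(x_1\otimes v\otimes u)=p(x_2\otimes v\otimes u)$ for all $u\in X$, $v\in Y$, then $x_1=x_2$; 5. if $q(v\otimes u\otimes y_1)=q(v\otimes u\otimes y_2)$ for all $v\in Y$, $u\in X$, then $y_1=y_2$; 6. if $q(y_1\otimes u\otimes v)=q(y_2\otimes u\otimes v)$ for all $u\in X$, $v\in Y$, then $y_1=y_2$.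
   Context: A sup-lattice is a complete lattice; sup-preserving maps preserve arbitrary joins. $\otimes$ denotes the tensor product in the category of sup-lattices (the universal sup-lattice for maps preserving arbitrary joins in each variable separately; it is join-generated by the elementary tensors). A quantale is a sup-lattice $A$ with an associative multiplication distributing over arbitrary joins on both sides. A right $A$-module is a sup-lattice $M$ with an action $M\times A\to M$ satisfying $m\cdot(a\cdot b)=(m\cdot a)\cdot b$ and preserving arbitrary joins in each variable; left modules are defined dually. A right $A$-module $M$ is essential if every element of $M$ is a join of elements $m\cdot a$, separated if ($m\cdot a=n\cdot a$ for all $a\in A$) implies $m=n$, and m-regular if it is both essential and separated; dually for left modules. An (m-regular) $A,B$-bimodule is a sup-lattice that is an (m-regular) left $A$-module and an (m-regular) right $B$-module with commuting actions. A quantale $A$ is m-regular if it is m-regular as an $A,A$-bimodule over itself. A Morita context between m-regular quantales $A$ and $B$ is a 6-tuple $(A,B,X,Y,(-,-),[-,-])$ where $X$ is an m-regular $A,B$-bimodule, $Y$ is an m-regular $B,A$-bimodule, and $(-,-):X\times Y\to A$, $[-,-]:Y\times X\to B$ are bimodule maps (preserving joins in each variable and compatible with the outer actions) satisfying $(x\cdot b,y)=(x,b\cdot y)$, $[y\cdot a,x]=[y,a\cdot x]$, $(x_1,y)\cdot x_2=x_1\cdot[y,x_2]$, $[y_1,x]\cdot y_2=y_1\cdot(x,y_2)$ for all $x,x_i\in X$, $y,y_i\in Y$, $a\in A$, $b\in B$, and such that the induced sup-preserving maps $X\otimes Y\to A$ and $Y\otimes X\to B$ are surjective. The pair $(X,Y)$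 is then called a Morita pair. *)

Record SupLattice := {
  sl_car :> Type;
  sl_le : sl_car -> sl_car -> Prop;
  sl_refl : forall x, sl_le x x;
  sl_trans : forall x y z, sl_le x y -> sl_le y z -> sl_le x z;
  sl_antisym : forall x y, sl_le x y -> sl_le y x -> x = y;
  sl_sup : (sl_car -> Prop) -> sl_car;
  sl_sup_ub : forall (S : sl_car -> Prop) x, S x -> sl_le x (sl_sup S);
  sl_sup_least : forall (S : sl_car -> Prop) z,
      (forall x, S x -> sl_le x z) -> sl_le (sl_sup S) z }.

Arguments sl_le {s} _ _.
Arguments sl_sup {s} _.

Definition img {A B : Type} (f : A -> B) (S : A -> Prop) : B -> Prop :=
  fun b => exists a, S a /\ b = f a.

Definition surj {A B : Type} (f : A -> B) : Prop := forall b, exists a, f a = b.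

Definition sup_pres {X Y : SupLattice} (f : X -> Y) : Prop :=
  forall S : X -> Prop, f (sl_sup S) = sl_sup (img f S).

Definition bimorph {X Y Z : SupLattice} (g : X -> Y -> Z) : Prop :=
  (forall y, sup_pres (fun x => g x y)) /\ (forall x, sup_pres (g x)).

Definition trimorph {X Y W Z : SupLattice} (g : X -> Y -> W -> Z) : Prop :=
  (forall y w, sup_pres (fun x => g x y w)) /\
  (forall x w, sup_pres (fun y => g x y w)) /\
  (forall x y, sup_pres (g x y)).

(* (T, t) is a tensor product X (x) Y in the category of sup-lattices:
   t x y = x (x) y, and t is the universal bimorphism. *)
Definition is_tensor2 (X Y T : SupLattice) (t : X -> Y -> T) : Prop :=
  bimorph t /\
  forall (Z : SupLattice) (g : X -> Y -> Z), bimorph g ->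
    exists h : T -> Z, sup_pres h /\ (forall x y, h (t x y) = g x y) /\
      forall h' : T -> Z, sup_pres h' -> (forall x y, h' (t x y) = g x y) ->
        forall u, h' u = h u.

(* (T, t) is a threefold tensor product X (x) Y (x) W: t x y w = x (x) y (x) w,
   universal among maps preserving joins in each variable. *)
Definition is_tensor3 (X Y W T : SupLattice) (t : X -> Y -> W -> T) : Prop :=
  trimorph t /\
  forall (Z : SupLattice) (g : X -> Y -> W -> Z), trimorph g ->
    exists h : T -> Z, sup_pres h /\ (forall x y w, h (t x y w) = g x y w) /\
      forall h' : T -> Z, sup_pres h' -> (forall x y w, h' (t x y w) = g x y w) ->
        forall u, h' u = h u.

Record Quantale := {
  q_sl :> SupLattice;
  q_mul : q_sl -> q_sl -> q_sl;
  q_assoc : forall a b c, q_mul a (q_mul b c) = q_mul (q_mul a b) c;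
  q_bimorph : bimorph q_mul }.

Arguments q_mul {q} _ _.

Definition is_rmod (A : Quantale) (M : SupLattice) (act : M -> A -> M) : Prop :=
  (forall m (a b : A), act m (q_mul a b) = act (act m a) b) /\ bimorph act.

Definition is_lmod (A : Quantale) (M : SupLattice) (act : A -> M -> M) : Prop :=
  (forall (a b : A) m, act (q_mul a b) m = act a (act b m)) /\ bimorph act.

Definition r_essential (A : Quantale) (M : SupLattice) (act : M -> A -> M) : Prop :=
  forall m : M, exists S : M -> Prop,
    (forall z, S z -> exists (n : M) (a : A), z = act n a) /\ m = sl_sup S.

Definition l_essential (A : Quantale) (M : SupLattice) (act : A -> M -> M) : Prop :=
  forall m : M, exists S : M -> Prop,
    (forall z, S z -> exists (a : A) (n : M), z = act a n) /\ m = sl_sup S.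

Definition r_separated (A : Quantale) (M : SupLattice) (act : M -> A -> M) : Prop :=
  forall m n : M, (forall a : A, act m a = act n a) -> m = n.

Definition l_separated (A : Quantale) (M : SupLattice) (act : A -> M -> M) : Prop :=
  forall m n : M, (forall a : A, act a m = act a n) -> m = n.

Definition mreg_rmod (A : Quantale) (M : SupLattice) (act : M -> A -> M) : Prop :=
  is_rmod A M act /\ r_essential A M act /\ r_separated A M act.

Definition mreg_lmod (A : Quantale) (M : SupLattice) (act : A -> M -> M) : Prop :=
  is_lmod A M act /\ l_essential A M act /\ l_separated A M act.

Definition mreg_bimod (A B : Quantale) (M : SupLattice)
    (la : A -> M -> M) (ra : M -> B -> M) : Prop :=
  mreg_lmod A M la /\ mreg_rmod B M ra /\
  (forall (a : A) (m : M) (b : B), ra (la a m) b = la a (ra m b)).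

Definition mreg_quantale (A : Quantale) : Prop :=
  mreg_bimod A A A (@q_mul A) (@q_mul A).

(* Morita context (A,B,X,Y,(-,-),[-,-]); the tensor products X (x) Y and
   Y (x) X are given by (TXY, t2) and (TYX, s2). *)
Definition morita_context (A B : Quantale) (X Y : SupLattice)
    (laX : A -> X -> X) (raX : X -> B -> X)
    (laY : B -> Y -> Y) (raY : Y -> A -> Y)
    (pr : X -> Y -> A) (br : Y -> X -> B)
    (TXY : SupLattice) (t2 : X -> Y -> TXY)
    (TYX : SupLattice) (s2 : Y -> X -> TYX) : Prop :=
  mreg_quantale A /\ mreg_quantale B /\
  mreg_bimod A B X laX raX /\ mreg_bimod B A Y laY raY /\
  bimorph pr /\ bimorph br /\
  (forall a x y, pr (laX a x) y = q_mul a (pr x y)) /\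
  (forall x y a, pr x (raY y a) = q_mul (pr x y) a) /\
  (forall b y x, br (laY b y) x = q_mul b (br y x)) /\
  (forall y x b, br y (raX x b) = q_mul (br y x) b) /\
  (forall x b y, pr (raX x b) y = pr x (laY b y)) /\
  (forall y a x, br (raY y a) x = br y (laX a x)) /\
  (forall x1 y x2, laX (pr x1 y) x2 = raX x1 (br y x2)) /\
  (forall y1 x y2, laY (br y1 x) y2 = raY y1 (pr x y2)) /\
  (exists h : TXY -> A, sup_pres h /\ (forall x y, h (t2 x y) = pr x y) /\ surj h) /\
  (exists h : TYX -> B, sup_pres h /\ (forall y x, h (s2 y x) = br y x) /\ surj h).

Definition morita_pair (X Y : SupLattice)
    (TXY : SupLattice) (t2 : X -> Y -> TXY)
    (TYX : SupLattice) (s2 : Y -> X -> TYX) : Prop :=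
  exists (A B : Quantale)
         (laX : A -> X -> X) (raX : X -> B -> X)
         (laY : B -> Y -> Y) (raY : Y -> A -> Y)
         (pr : X -> Y -> A) (br : Y -> X -> B),
    morita_context A B X Y laX raX laY raY pr br TXY t2 TYX s2.

(* Forward: put p (x ⊗ y ⊗ x') = (x, y) · x' and q (y ⊗ x ⊗ y') = [y, x] · y'.  Conditions 1-2
   are the Morita identities combined with the bimodule laws of the pairings; p and q are onto
   because X and Y are essential and the pairings are onto A and B; conditions 3-6 are
   separatedness of the actions, tested on the generators (x, y) of A and [y, x] of B.

   Backward: with P x y x' = p (x ⊗ y ⊗ x') and Q y x y' = q (y ⊗ x ⊗ y'), let A consist of the
   pairs of maps (X -> X, Y -> Y) that are joins of the elementary pairs (P x y -, Q - x y),
   multiplied by composition, acting on X on the left and on Y on the right.  Conditions 1-2 make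
   such pairs closed under composition and (x, y) |-> (P x y -, Q - x y) a bimodule pairing;
   surjectivity of p and q gives essentiality and conditions 3-6 separatedness.  B is built in the same way with the
   roles of X and Y exchanged. *)

From Stdlib Require Import ProofIrrelevance FunctionalExtensionality Setoid.

Section SupLatticeFacts.
Context {L : SupLattice}.

Lemma img_sup_ub {I} (f : I -> L) (S : I -> Prop) i :
  S i -> sl_le (f i) (sl_sup (img f S)).
Proof. intros Si; apply sl_sup_ub; exists i; auto. Qed.

Lemma img_sup_least {I} (f : I -> L) (S : I -> Prop) z :
  (forall i, S i -> sl_le (f i) z) -> sl_le (sl_sup (img f S)) z.
Proof. intros Hz; apply sl_sup_least; intros w (i & Si & ->); auto. Qed.

Lemma img_sup_subset {I} (f : I -> L) (S T : I -> Prop) :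
  (forall i, S i -> T i) -> sl_le (sl_sup (img f S)) (sl_sup (img f T)).
Proof. intros ST; apply img_sup_least; intros i Si; apply img_sup_ub; auto. Qed.

Lemma img_sup_ext {I} (f g : I -> L) (S : I -> Prop) :
  (forall i, S i -> f i = g i) -> sl_sup (img f S) = sl_sup (img g S).
Proof.
  intros E; apply sl_antisym; apply img_sup_least; intros i Si;
    [rewrite E by exact Si | rewrite <- E by exact Si]; apply img_sup_ub; exact Si.
Qed.

Lemma img_sup_comp {I J} (f : J -> L) (g : I -> J) (S : I -> Prop) :
  sl_sup (img f (img g S)) = sl_sup (img (fun i => f (g i)) S).
Proof.
  apply sl_antisym.
  - apply img_sup_least; intros j (i & Si & ->); apply (img_sup_ub (fun i => f (g i))); exact Si.
  - apply img_sup_least; intros i Si; apply img_sup_ub; exists i; auto.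
Qed.

Lemma img_sup_singleton {I} (f : I -> L) i : sl_sup (img f (fun k => k = i)) = f i.
Proof.
  apply sl_antisym; [apply img_sup_least; intros k ->; apply sl_refl | apply img_sup_ub; reflexivity].
Qed.

Lemma img_sup_comm {I J} (F : I -> J -> L) (S : I -> Prop) (T : J -> Prop) :
  sl_sup (img (fun i => sl_sup (img (F i) T)) S) =
  sl_sup (img (fun j => sl_sup (img (fun i => F i j) S)) T).
Proof.
  apply sl_antisym; apply img_sup_least; intros i Si; apply img_sup_least; intros j Tj.
  - apply sl_trans with (sl_sup (img (fun i => F i j) S));
      [apply (img_sup_ub (fun i => F i j)) |
       apply (img_sup_ub (fun j => sl_sup (img (fun i => F i j) S)))]; auto.
  - apply sl_trans with (sl_sup (img (F j) T));
      [apply (img_sup_ub (F j)) | apply (img_sup_ub (fun i => sl_sup (img (F i) T)))]; auto.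
Qed.

End SupLatticeFacts.

Lemma sup_pres_img {L1 L2 : SupLattice} (f : L1 -> L2) {I} (g : I -> L1) (S : I -> Prop) :
  sup_pres f -> f (sl_sup (img g S)) = sl_sup (img (fun i => f (g i)) S).
Proof. intros Hf; rewrite Hf; apply img_sup_comp. Qed.

Lemma sup_pres_id {L : SupLattice} : sup_pres (fun x : L => x).
Proof.
  intros S; apply sl_antisym.
  - apply sl_sup_least; intros x Sx; apply (img_sup_ub (fun x => x)); exact Sx.
  - apply img_sup_least; intros x Sx; apply sl_sup_ub; exact Sx.
Qed.

Lemma sup_pres_comp {L1 L2 L3 : SupLattice} (f : L2 -> L3) (g : L1 -> L2) :
  sup_pres f -> sup_pres g -> sup_pres (fun x => f (g x)).
Proof. intros Hf Hg S; rewrite Hg; apply sup_pres_img; exact Hf. Qed.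

Lemma sup_pres_ext_generated {I} {M L : SupLattice} (e : I -> M) (f g : M -> L) :
  (forall m, exists K, m = sl_sup (img e K)) -> sup_pres f -> sup_pres g ->
  (forall i, f (e i) = g (e i)) -> forall m, f m = g m.
Proof.
  intros gen Hf Hg E m; destruct (gen m) as [K ->].
  rewrite (sup_pres_img f), (sup_pres_img g) by assumption.
  apply img_sup_ext; auto.
Qed.

Lemma sup_pres_surj {T L : SupLattice} (p : T -> L) :
  sup_pres p -> (forall l, sl_le l (sl_sup (img p (fun u => sl_le (p u) l)))) -> surj p.
Proof.
  intros Hp below l; exists (sl_sup (fun u => sl_le (p u) l)); rewrite Hp.
  apply sl_antisym; [apply img_sup_least; auto | apply below].
Qed.

Section TrimorphFacts.
Context {X Y W Z : SupLattice} (g : X -> Y -> W -> Z) (Hg : trimorph g).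

Lemma trimorph_img_1 y w {I} (f : I -> X) S :
  g (sl_sup (img f S)) y w = sl_sup (img (fun i => g (f i) y w) S).
Proof. apply (sup_pres_img (fun x => g x y w)), (proj1 Hg). Qed.

Lemma trimorph_img_2 x w {I} (f : I -> Y) S :
  g x (sl_sup (img f S)) w = sl_sup (img (fun i => g x (f i) w) S).
Proof. apply (sup_pres_img (fun y => g x y w)), (proj1 (proj2 Hg)). Qed.

Lemma trimorph_img_3 x y {I} (f : I -> W) S :
  g x y (sl_sup (img f S)) = sl_sup (img (fun i => g x y (f i)) S).
Proof. apply (sup_pres_img (g x y)), (proj2 (proj2 Hg)). Qed.

End TrimorphFacts.

Lemma trimorph_bimorph_comp {X Y C W Z : SupLattice} (m : C -> W -> Z) (b : X -> Y -> C) :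
  bimorph m -> bimorph b -> trimorph (fun x y w => m (b x y) w).
Proof.
  intros [Hm1 Hm2] [Hb1 Hb2]; split; [|split].
  - intros y w; apply (sup_pres_comp (fun c => m c w) (fun x => b x y)); auto.
  - intros x w; apply (sup_pres_comp (fun c => m c w) (b x)); auto.
  - intros x y; apply Hm2.
Qed.

Lemma sup_pres_comp_trimorph {X Y W T Z : SupLattice} {p : T -> Z} {t : X -> Y -> W -> T} :
  sup_pres p -> trimorph t -> trimorph (fun x y w => p (t x y w)).
Proof.
  intros Hp (Ht1 & Ht2 & Ht3); split; [|split]; intros; apply sup_pres_comp; auto.
Qed.

Definition join_closed {L : SupLattice} (G : L -> Prop) : Prop :=
  forall F : L -> Prop, (forall x, F x -> G x) -> G (sl_sup F).

Section SubSupLattice.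
Context (L : SupLattice) (G : L -> Prop) (HG : join_closed G).

Definition sub_sup (F : {x | G x} -> Prop) : {x | G x}.
Proof.
  exists (sl_sup (img (@proj1_sig _ _) F)).
  apply HG; intros x (a & _ & ->); apply proj2_sig.
Defined.

Definition sub_sup_lattice : SupLattice.
Proof.
  refine {| sl_car := {x | G x};
            sl_le a b := sl_le (proj1_sig a) (proj1_sig b);
            sl_sup := sub_sup |}.
  - intros; apply sl_refl.
  - intros a b c; apply sl_trans.
  - intros a b Hab Hba; apply eq_sig_hprop;
      [intros; apply proof_irrelevance | apply sl_antisym; auto].
  - intros F a Fa; apply (img_sup_ub (@proj1_sig _ _)); exact Fa.
  - intros F b Hb; apply img_sup_least; exact Hb.
Defined.

Lemma sup_pres_proj1_sig : sup_pres (X := sub_sup_lattice) (@proj1_sig L G).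
Proof. intros F; reflexivity. Qed.

Lemma sup_pres_corestr {M : SupLattice} (f : M -> L) (Gf : forall m, G (f m)) :
  sup_pres f -> sup_pres (Y := sub_sup_lattice) (fun m => exist G (f m) (Gf m)).
Proof.
  intros Hf S; apply eq_sig_hprop; [intros; apply proof_irrelevance|].
  simpl; rewrite Hf; symmetry.
  apply (img_sup_comp (@proj1_sig L G) (fun m => exist G (f m) (Gf m))).
Qed.

End SubSupLattice.

(* G is a sub-sup-lattice through which t factors, and by uniqueness in the universal property
   the factorization followed by the inclusion is the identity. *)
Lemma tensor2_ind {X Y T : SupLattice} (t : X -> Y -> T) :
  is_tensor2 X Y T t ->
  forall G : T -> Prop, join_closed G -> (forall x y, G (t x y)) -> forall u, G u.
Proof.
  intros [Ht univ] G HG Gt.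
  pose (t' x y := exist G (t x y) (Gt x y) : sub_sup_lattice T G HG).
  assert (Ht' : bimorph t').
  { destruct Ht as [Ht1 Ht2]; split; intros;
      [apply (sup_pres_corestr T G HG (fun x => t x _))
      | apply (sup_pres_corestr T G HG (t _))]; auto. }
  destruct (univ _ t' Ht') as (h & Hh & ht & _).
  destruct (univ T t Ht) as (h0 & _ & _ & h0_unique).
  assert (retract : forall u, proj1_sig (h u) = u).
  { intros u; transitivity (h0 u); [|symmetry].
    - apply (h0_unique (fun v => proj1_sig (h v))); [|intros; rewrite ht; reflexivity].
      apply sup_pres_comp; [apply sup_pres_proj1_sig | exact Hh].
    - apply (h0_unique (fun v => v)); [apply sup_pres_id | reflexivity]. }
  intros u; rewrite <- retract; apply proj2_sig.
Qed.

Lemma tensor3_ind {X Y W T : SupLattice} (t : X -> Y -> W -> T) :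
  is_tensor3 X Y W T t ->
  forall G : T -> Prop, join_closed G -> (forall x y w, G (t x y w)) -> forall u, G u.
Proof.
  intros [Ht univ] G HG Gt.
  pose (t' x y w := exist G (t x y w) (Gt x y w) : sub_sup_lattice T G HG).
  assert (Ht' : trimorph t').
  { destruct Ht as (Ht1 & Ht2 & Ht3); split; [|split]; intros;
      [apply (sup_pres_corestr T G HG (fun x => t x _ _))
      | apply (sup_pres_corestr T G HG (fun y => t _ y _))
      | apply (sup_pres_corestr T G HG (t _ _))]; auto. }
  destruct (univ _ t' Ht') as (h & Hh & ht & _).
  destruct (univ T t Ht) as (h0 & _ & _ & h0_unique).
  assert (retract : forall u, proj1_sig (h u) = u).
  { intros u; transitivity (h0 u); [|symmetry].
    - apply (h0_unique (fun v => proj1_sig (h v))); [|intros; rewrite ht; reflexivity].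
      apply sup_pres_comp; [apply sup_pres_proj1_sig | exact Hh].
    - apply (h0_unique (fun v => v)); [apply sup_pres_id | reflexivity]. }
  intros u; rewrite <- retract; apply proj2_sig.
Qed.

Definition join_dense {I} {T : SupLattice} (e : I -> T) : Prop :=
  forall u, u = sl_sup (img e (fun i => sl_le (e i) u)).

Lemma join_dense_of_induction {I} {T : SupLattice} (e : I -> T) :
  (forall G : T -> Prop, join_closed G -> (forall i, G (e i)) -> forall u, G u) ->
  join_dense e.
Proof.
  intros ind u; apply (ind (fun u => u = sl_sup (img e (fun i => sl_le (e i) u)))).
  - intros F HF; apply sl_antisym.
    + apply sl_sup_least; intros x Fx; rewrite (HF x Fx) at 1.
      apply img_sup_subset; intros i Hi; apply sl_trans with x; [exact Hi | apply sl_sup_ub, Fx].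
    + apply img_sup_least; auto.
  - intros i; apply sl_antisym; [apply img_sup_ub, sl_refl | apply img_sup_least; auto].
Qed.

Lemma tensor2_image_generated {X Y T L : SupLattice} {t : X -> Y -> T}
    {h : T -> L} {g : X -> Y -> L} :
  is_tensor2 X Y T t -> sup_pres h -> surj h -> (forall x y, h (t x y) = g x y) ->
  forall l, exists K, l = sl_sup (img (uncurry g) K).
Proof.
  intros Ht Hh Hs hg l; destruct (Hs l) as [u <-].
  assert (dense : join_dense (uncurry t)).
  { apply join_dense_of_induction; intros G HG Gt; apply (tensor2_ind t Ht G HG).
    intros x y; exact (Gt (x, y)). }
  exists (fun k => sl_le (uncurry t k) u); rewrite (dense u) at 1.
  rewrite sup_pres_img by exact Hh; apply img_sup_ext; intros [x y] _; apply hg.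
Qed.

Lemma tensor3_image_generated {X Y W T L : SupLattice} {t : X -> Y -> W -> T}
    {h : T -> L} {g : X -> Y -> W -> L} :
  is_tensor3 X Y W T t -> sup_pres h -> surj h -> (forall x y w, h (t x y w) = g x y w) ->
  forall l, exists K, l = sl_sup (img (uncurry (uncurry g)) K).
Proof.
  intros Ht Hh Hs hg l; destruct (Hs l) as [u <-].
  assert (dense : join_dense (uncurry (uncurry t))).
  { apply join_dense_of_induction; intros G HG Gt; apply (tensor3_ind t Ht G HG).
    intros x y w; exact (Gt ((x, y), w)). }
  exists (fun k => sl_le (uncurry (uncurry t) k) u); rewrite (dense u) at 1.
  rewrite sup_pres_img by exact Hh; apply img_sup_ext; intros [[x y] w] _; apply hg.
Qed.

Section ActionTernaryMap.
Context {A B : Quantale} {X Y : SupLattice}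
  (laX : A -> X -> X) (raX : X -> B -> X) (pr : X -> Y -> A) (br : Y -> X -> B)
  (HX : mreg_bimod A B X laX raX) (Hpr : bimorph pr)
  (pr_gen : forall a, exists K, a = sl_sup (img (uncurry pr) K))
  (br_gen : forall b, exists K, b = sl_sup (img (uncurry br) K))
  (Hid : forall x1 y x2, laX (pr x1 y) x2 = raX x1 (br y x2))
  {TXYX : SupLattice} {t3 : X -> Y -> X -> TXYX}.

Lemma action_ternary_map_surj (p : TXYX -> X) :
  sup_pres p -> (forall x y z, p (t3 x y z) = laX (pr x y) z) -> surj p.
Proof.
  destruct HX as (((_ & HlaX) & essX & _) & _).
  intros Hp pt; apply sup_pres_surj; [exact Hp|]; intros x.
  destruct (essX x) as (S & HS & Ex); rewrite Ex at 1.
  apply sl_sup_least; intros z Sz.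
  assert (z_le_x : sl_le z x) by (rewrite Ex; apply sl_sup_ub, Sz).
  destruct (HS z Sz) as (a & n & ->); destruct (pr_gen a) as [K ->].
  rewrite (sup_pres_img (fun a => laX a n)) in * by apply HlaX.
  apply img_sup_least; intros [u v] Kuv.
  apply sl_trans with (p (t3 u v n)); [rewrite pt; apply sl_refl |].
  apply img_sup_ub; rewrite pt; apply sl_trans with (2 := z_le_x).
  apply (img_sup_ub (fun k => laX (uncurry pr k) n) K (u, v)); exact Kuv.
Qed.

Lemma action_ternary_map_separated_r (p : TXYX -> X) :
  (forall x y z, p (t3 x y z) = laX (pr x y) z) ->
  forall x1 x2, (forall u v, p (t3 u v x1) = p (t3 u v x2)) -> x1 = x2.
Proof.
  destruct HX as (((_ & HlaX) & _ & lsepX) & _).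
  intros pt x1 x2 E; apply lsepX.
  apply (sup_pres_ext_generated (uncurry pr)); auto; try apply HlaX.
  intros [u v]; simpl; rewrite <- !pt; apply E.
Qed.

Lemma action_ternary_map_separated_l (p : TXYX -> X) :
  (forall x y z, p (t3 x y z) = laX (pr x y) z) ->
  forall x1 x2, (forall u v, p (t3 x1 v u) = p (t3 x2 v u)) -> x1 = x2.
Proof.
  destruct HX as (_ & ((_ & HraX) & _ & rsepX) & _).
  intros pt x1 x2 E; apply rsepX.
  apply (sup_pres_ext_generated (uncurry br)); auto; try apply HraX.
  intros [v u]; simpl; rewrite <- !Hid, <- !pt; apply E.
Qed.

Lemma ternary_map_of_bimodule :
  is_tensor3 X Y X TXYX t3 ->
  exists p : TXYX -> X, sup_pres p /\ surj p /\
    (forall x y z, p (t3 x y z) = laX (pr x y) z) /\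
    (forall x1 x2 : X, (forall (u : X) (v : Y), p (t3 u v x1) = p (t3 u v x2)) -> x1 = x2) /\
    (forall x1 x2 : X, (forall (u : X) (v : Y), p (t3 x1 v u) = p (t3 x2 v u)) -> x1 = x2).
Proof.
  intros HXYX.
  assert (Htri : trimorph (fun x y z => laX (pr x y) z))
    by exact (trimorph_bimorph_comp laX pr (proj2 (proj1 (proj1 HX))) Hpr).
  destruct (proj2 HXYX X _ Htri) as (p & Hp & pt & _).
  exists p; split; [exact Hp |].
  split; [exact (action_ternary_map_surj p Hp pt) |].
  split; [exact pt |].
  split; [exact (action_ternary_map_separated_r p pt) | exact (action_ternary_map_separated_l p pt)].
Qed.

End ActionTernaryMap.

Lemma ternary_assoc_of_morita {A B : Quantale} {X Y : SupLattice}
    (laX : A -> X -> X) (laY : B -> Y -> Y) (raY : Y -> A -> Y)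
    (pr : X -> Y -> A) (br : Y -> X -> B) :
  is_lmod A X laX ->
  (forall a x y, pr (laX a x) y = q_mul a (pr x y)) ->
  (forall x y a, pr x (raY y a) = q_mul (pr x y) a) ->
  (forall y1 x y2, laY (br y1 x) y2 = raY y1 (pr x y2)) ->
  forall x1 x2 x3 y1 y2,
    laX (pr (laX (pr x1 y1) x2) y2) x3 = laX (pr x1 (laY (br y1 x2) y2)) x3 /\
    laX (pr x1 (laY (br y1 x2) y2)) x3 = laX (pr x1 y1) (laX (pr x2 y2) x3).
Proof.
  intros [assoc _] prl prr idY x1 x2 x3 y1 y2.
  rewrite idY, prl, prr; split; [reflexivity | apply assoc].
Qed.

Set Implicit Arguments.

(* The right-hand side of the theorem for P x y x' = p (x ⊗ y ⊗ x') and Q y x y' = q (y ⊗ x ⊗ y'),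
   with surjectivity of p and q expressed as generation.  Conditions 4 and 5 are the separation
   fields of the system with X and Y exchanged. *)
Record ternary_system (X Y : SupLattice) (P : X -> Y -> X -> X) (Q : Y -> X -> Y -> Y) : Prop := {
  P_trimorph : trimorph P;
  Q_trimorph : trimorph Q;
  P_assoc : forall x1 x2 x3 y1 y2,
    P (P x1 y1 x2) y2 x3 = P x1 (Q y1 x2 y2) x3 /\ P x1 (Q y1 x2 y2) x3 = P x1 y1 (P x2 y2 x3);
  Q_assoc : forall x1 x2 y1 y2 y3,
    Q (Q y1 x1 y2) x2 y3 = Q y1 (P x1 y2 x2) y3 /\ Q y1 (P x1 y2 x2) y3 = Q y1 x1 (Q y2 x2 y3);
  P_separated : forall x1 x2, (forall u v, P u v x1 = P u v x2) -> x1 = x2;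
  Q_separated : forall y1 y2, (forall u v, Q y1 u v = Q y2 u v) -> y1 = y2;
  P_generates : forall x, exists K, x = sl_sup (img (uncurry (uncurry P)) K);
  Q_generates : forall y, exists K, y = sl_sup (img (uncurry (uncurry Q)) K) }.

Section MultiplierQuantale.
Context {X Y : SupLattice} (P : X -> Y -> X -> X) (Q : Y -> X -> Y -> Y).

Definition represents (f : X -> X) (g : Y -> Y) (S : X * Y -> Prop) : Prop :=
  (forall z, f z = sl_sup (img (fun k => uncurry P k z) S)) /\
  (forall v, g v = sl_sup (img (uncurry (Q v)) S)).

(* An element of the quantale built from P and Q.  It acts on X on the left through actX and on
   Y on the right through actY, so products compose actX covariantly and actY contravariantly. *)
Record multiplier := Multiplier {
  actX : X -> X;
  actY : Y -> Y;
  mult_repr : exists S, represents actX actY S }.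

Lemma mult_ext (a b : multiplier) :
  (forall z, actX a z = actX b z) -> (forall v, actY a v = actY b v) -> a = b.
Proof.
  destruct a as [f g Ra], b as [f' g' Rb]; simpl; intros Ef Eg.
  apply functional_extensionality in Ef, Eg; subst; f_equal; apply proof_irrelevance.
Qed.

Lemma mult_sup_repr (F : multiplier -> Prop) :
  exists S, represents (fun z => sl_sup (img (fun a => actX a z) F))
                       (fun v => sl_sup (img (fun a => actY a v) F)) S.
Proof.
  exists (fun k => exists a S, F a /\ represents (actX a) (actY a) S /\ S k).
  split; intros; apply sl_antisym.
  - apply img_sup_least; intros a Fa; destruct (mult_repr a) as (S & RS).
    rewrite (proj1 RS); apply img_sup_subset; intros k Sk; exists a, S; auto.
  - apply img_sup_least; intros k (a & S & Fa & RS & Sk).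
    apply sl_trans with (actX a z);
      [rewrite (proj1 RS); apply (img_sup_ub (fun k => uncurry P k z)), Sk |].
    apply (img_sup_ub (fun a => actX a z)), Fa.
  - apply img_sup_least; intros a Fa; destruct (mult_repr a) as (S & RS).
    rewrite (proj2 RS); apply img_sup_subset; intros k Sk; exists a, S; auto.
  - apply img_sup_least; intros k (a & S & Fa & RS & Sk).
    apply sl_trans with (actY a v);
      [rewrite (proj2 RS); apply (img_sup_ub (uncurry (Q v))), Sk |].
    apply (img_sup_ub (fun a => actY a v)), Fa.
Qed.

Definition mult_sup (F : multiplier -> Prop) : multiplier := Multiplier (mult_sup_repr F).

Definition mult_le (a b : multiplier) : Prop :=
  (forall z, sl_le (actX a z) (actX b z)) /\ (forall v, sl_le (actY a v) (actY b v)).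

Definition mult_lattice : SupLattice.
Proof.
  refine {| sl_car := multiplier; sl_le := mult_le; sl_sup := mult_sup |}.
  - abstract (split; intros; apply sl_refl).
  - abstract (intros a b c [ab1 ab2] [bc1 bc2]; split; intros; eapply sl_trans; eauto).
  - abstract (intros a b [ab1 ab2] [ba1 ba2]; apply mult_ext; intros; apply sl_antisym; auto).
  - abstract (intros F a Fa; split; intros;
      [apply (img_sup_ub (fun b => actX b _)) | apply (img_sup_ub (fun b => actY b _))]; exact Fa).
  - abstract (intros F b Hb; split; intros; apply img_sup_least; intros a Fa; apply Hb, Fa).
Defined.
Canonical mult_lattice.

Lemma pair_repr x y : exists S, represents (P x y) (fun v => Q v x y) S.
Proof.
  exists (fun k => k = (x, y)); split; intros; symmetry;
    [apply (img_sup_singleton (fun k => uncurry P k z)) | apply (img_sup_singleton (uncurry (Q v)))].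
Qed.

Definition pair_mult (x : X) (y : Y) : multiplier := Multiplier (pair_repr x y).

Context (H : ternary_system X Y P Q).

Lemma actX_sup_pres (a : multiplier) : sup_pres (actX a).
Proof.
  intros T; destruct (mult_repr a) as (S & HX & _); rewrite HX.
  transitivity (sl_sup (img (fun k => sl_sup (img (uncurry P k) T)) S)).
  { apply img_sup_ext; intros [x y] _; apply (proj2 (proj2 (P_trimorph H))). }
  rewrite img_sup_comm; apply img_sup_ext; intros z _; symmetry; apply HX.
Qed.

Lemma actY_sup_pres (a : multiplier) : sup_pres (actY a).
Proof.
  intros T; destruct (mult_repr a) as (S & _ & HY); rewrite HY.
  transitivity (sl_sup (img (fun k => sl_sup (img (fun v => uncurry (Q v) k) T)) S)).
  { apply img_sup_ext; intros [x y] _; apply (proj1 (Q_trimorph H)). }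
  rewrite img_sup_comm; apply img_sup_ext; intros v _; symmetry; apply HY.
Qed.

Lemma actX_P (a : multiplier) x y z : actX a (P x y z) = P (actX a x) y z.
Proof.
  destruct (mult_repr a) as (S & HX & _).
  rewrite !HX, (trimorph_img_1 P (P_trimorph H)); apply img_sup_ext; intros [u v] _; simpl.
  destruct (P_assoc H u x z v y) as [E1 E2]; rewrite E1, E2; reflexivity.
Qed.

Lemma P_actY (a : multiplier) x y z : P x (actY a y) z = P x y (actX a z).
Proof.
  destruct (mult_repr a) as (S & HX & HY).
  rewrite HX, HY, (trimorph_img_2 P (P_trimorph H)), (trimorph_img_3 P (P_trimorph H)).
  apply img_sup_ext; intros [u v] _; apply (proj2 (P_assoc H _ _ _ _ _)).
Qed.

Lemma Q_actX (a : multiplier) v x y : Q v (actX a x) y = Q (actY a v) x y.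
Proof.
  destruct (mult_repr a) as (S & HX & HY).
  rewrite HX, HY, (trimorph_img_2 Q (Q_trimorph H)), (trimorph_img_1 Q (Q_trimorph H)).
  apply img_sup_ext; intros [u w] _; symmetry; apply (proj1 (Q_assoc H _ _ _ _ _)).
Qed.

Lemma actY_Q (a : multiplier) v x y : Q v x (actY a y) = actY a (Q v x y).
Proof.
  destruct (mult_repr a) as (S & _ & HY).
  rewrite !HY, (trimorph_img_3 Q (Q_trimorph H)); apply img_sup_ext; intros [u w] _; simpl.
  destruct (Q_assoc H x u v y w) as [E1 E2]; rewrite E1, E2; reflexivity.
Qed.

Lemma mult_mul_repr (a b : multiplier) :
  exists S, represents (fun z => actX a (actX b z)) (fun v => actY b (actY a v)) S.
Proof.
  destruct (mult_repr b) as (S & HX & HY).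
  exists (img (fun k => (actX a (fst k), snd k)) S); split; intros; rewrite img_sup_comp.
  - rewrite HX, (sup_pres_img (actX a)) by apply actX_sup_pres.
    apply img_sup_ext; intros [x y] _; apply actX_P.
  - rewrite HY; apply img_sup_ext; intros [x y] _; symmetry; apply Q_actX.
Qed.

Definition mult_mul (a b : multiplier) : multiplier := Multiplier (mult_mul_repr a b).

Lemma mult_mul_bimorph : bimorph mult_mul.
Proof.
  split; [intros b F | intros a F]; apply mult_ext; intros; simpl; rewrite img_sup_comp;
    try reflexivity; apply sup_pres_img.
  - apply actY_sup_pres.
  - apply actX_sup_pres.
Qed.

Definition mult_quantale : Quantale :=
  {| q_sl := mult_lattice;
     q_mul := mult_mul;
     q_assoc a b c :=
       mult_ext (mult_mul a (mult_mul b c)) (mult_mul (mult_mul a b) c)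
         (fun _ => eq_refl) (fun _ => eq_refl);
     q_bimorph := mult_mul_bimorph |}.

Lemma pair_mult_bimorph : bimorph pair_mult.
Proof.
  split; [intros y F | intros x F]; apply mult_ext; intros; simpl; rewrite img_sup_comp.
  - apply (proj1 (P_trimorph H)).
  - apply (proj1 (proj2 (Q_trimorph H))).
  - apply (proj1 (proj2 (P_trimorph H))).
  - apply (proj2 (proj2 (Q_trimorph H))).
Qed.

Lemma pair_mult_actX (a : multiplier) x y : pair_mult (actX a x) y = mult_mul a (pair_mult x y).
Proof. apply mult_ext; intros; simpl; [symmetry; apply actX_P | apply Q_actX]. Qed.

Lemma pair_mult_actY (a : multiplier) x y : pair_mult x (actY a y) = mult_mul (pair_mult x y) a.
Proof. apply mult_ext; intros; simpl; [apply P_actY | apply actY_Q]. Qed.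

Lemma mult_generated_by_pairs (a : multiplier) :
  exists S, a = sl_sup (img (uncurry pair_mult) S).
Proof.
  destruct (mult_repr a) as (S & HX & HY); exists S.
  apply mult_ext; intros; simpl; rewrite img_sup_comp, ?HX, ?HY;
    apply img_sup_ext; intros [x y] _; reflexivity.
Qed.

Lemma pair_mult_generated_by_products x y :
  exists K, pair_mult x y =
    sl_sup (img (fun k => mult_mul (uncurry pair_mult (fst k)) (pair_mult (snd k) y)) K).
Proof.
  destruct (P_generates H x) as [K ->]; exists K.
  rewrite (sup_pres_img (fun x => pair_mult x y)) by apply pair_mult_bimorph.
  apply img_sup_ext; intros [[u v] w] _.
  apply (pair_mult_actX (pair_mult u v) w y).
Qed.

Lemma mult_join_of_products (m : multiplier) :
  exists S, (forall e, S e -> exists a b, e = mult_mul a b) /\ m = mult_sup S.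
Proof.
  exists (fun e => (exists a b, e = mult_mul a b) /\ mult_le e m).
  split; [intros e [He _]; exact He |].
  apply sl_antisym; [| apply sl_sup_least; intros e [_ He]; exact He].
  destruct (mult_generated_by_pairs m) as [S Em]; rewrite Em at 1.
  apply img_sup_least; intros [x y] Sxy; simpl.
  destruct (pair_mult_generated_by_products x y) as [K EK]; rewrite EK at 1.
  apply img_sup_least; intros k Kk; apply sl_sup_ub; split; [eauto |].
  apply sl_trans with (pair_mult x y).
  - rewrite EK.
    apply (img_sup_ub (fun k => mult_mul (uncurry pair_mult (fst k)) (pair_mult (snd k) y))), Kk.
  - rewrite Em; apply (img_sup_ub (uncurry pair_mult) S (x, y)), Sxy.
Qed.

Lemma mult_lmod : mreg_lmod mult_quantale X actX.
Proof.
  split; [|split].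
  - split; [intros; reflexivity | split; [intros x F; reflexivity | apply actX_sup_pres]].
  - intros x; destruct (P_generates H x) as [K Ex].
    exists (img (uncurry (uncurry P)) K); split; [|exact Ex].
    intros z ([[u v] w] & _ & ->); exists (pair_mult u v), w; reflexivity.
  - intros x1 x2 E; apply (P_separated H); intros u v; apply (E (pair_mult u v)).
Qed.

Lemma mult_rmod : mreg_rmod mult_quantale Y (fun y a => actY a y).
Proof.
  split; [|split].
  - split; [intros; reflexivity | split; [intros a; apply actY_sup_pres | intros y F; reflexivity]].
  - intros y; destruct (Q_generates H y) as [K Ey].
    exists (img (uncurry (uncurry Q)) K); split; [|exact Ey].
    intros z ([[v u] w] & _ & ->); exists v, (pair_mult u w); reflexivity.
  - intros y1 y2 E; apply (Q_separated H); intros u v; apply (E (pair_mult u v)).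
Qed.

Lemma mult_mreg : mreg_quantale mult_quantale.
Proof.
  split; [|split; [|intros; symmetry; apply q_assoc]]; split.
  - split; [intros; symmetry; apply q_assoc | apply mult_mul_bimorph].
  - split; [intros m; destruct (mult_join_of_products m) as (S & HS & Em); exists S; auto|].
    intros m n E; apply mult_ext.
    + intros z; apply (P_separated H); intros u v.
      exact (f_equal (fun c => actX c z) (E (pair_mult u v))).
    + apply (sup_pres_ext_generated (uncurry (uncurry Q))); try apply actY_sup_pres;
        [apply (Q_generates H) |]; intros [[v x] y].
      exact (f_equal (fun c => actY c v) (E (pair_mult x y))).
  - split; [intros; apply q_assoc | apply mult_mul_bimorph].
  - split; [intros m; destruct (mult_join_of_products m) as (S & HS & Em); exists S; auto|].
    intros m n E; apply mult_ext.
    + apply (sup_pres_ext_generated (uncurry (uncurry P))); try apply actX_sup_pres;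
        [apply (P_generates H) |]; intros [[x y] w].
      exact (f_equal (fun c => actX c w) (E (pair_mult x y))).
    + intros v; apply (Q_separated H); intros u w.
      exact (f_equal (fun c => actY c v) (E (pair_mult u w))).
Qed.

Lemma pair_mult_surj {TXY : SupLattice} (t2 : X -> Y -> TXY) :
  is_tensor2 X Y TXY t2 ->
  exists h : TXY -> mult_quantale, sup_pres h /\ (forall x y, h (t2 x y) = pair_mult x y) /\ surj h.
Proof.
  intros HXY; destruct (proj2 HXY _ pair_mult pair_mult_bimorph) as (h & Hh & ht & _).
  exists h; split; [| split]; auto.
  intros a; destruct (mult_generated_by_pairs a) as [S ->].
  exists (sl_sup (img (uncurry t2) S)); rewrite sup_pres_img by exact Hh.
  apply img_sup_ext; intros [x y] _; apply ht.
Qed.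

End MultiplierQuantale.

Section TwoMultiplierQuantales.
Context {X Y : SupLattice} {P : X -> Y -> X -> X} {Q : Y -> X -> Y -> Y}
  (H : ternary_system X Y P Q) (H' : ternary_system Y X Q P).

Lemma mult_actions_commute (a : multiplier P Q) (b : multiplier Q P) x :
  actY b (actX a x) = actX a (actY b x).
Proof.
  revert x; apply (sup_pres_ext_generated (uncurry (uncurry P))); [apply (P_generates H) | | |].
  - apply sup_pres_comp; [apply (actY_sup_pres H') | apply (actX_sup_pres H)].
  - apply sup_pres_comp; [apply (actX_sup_pres H) | apply (actY_sup_pres H')].
  - intros [[u v] w]; simpl.
    rewrite (actX_P H), <- (actY_Q H'), <- (actY_Q H'), (actX_P H); reflexivity.
Qed.

Lemma mult_bimod :
  mreg_bimod (mult_quantale H) (mult_quantale H') X (@actX _ _ P Q) (fun x b => actY b x).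
Proof.
  split; [apply mult_lmod | split; [apply (mult_rmod H') | intros; apply mult_actions_commute]].
Qed.

End TwoMultiplierQuantales.

Lemma pair_mult_swap {X Y : SupLattice} {P : X -> Y -> X -> X} {Q : Y -> X -> Y -> Y}
    (H : ternary_system X Y P Q) (a : multiplier P Q) y x :
  pair_mult Q P (actY a y) x = pair_mult Q P y (actX a x).
Proof. apply mult_ext; intros; simpl; [symmetry; apply (Q_actX H) | apply (P_actY H)]. Qed.

Lemma morita_pair_of_ternary {X Y : SupLattice} {P : X -> Y -> X -> X} {Q : Y -> X -> Y -> Y}
    (H : ternary_system X Y P Q) (H' : ternary_system Y X Q P)
    {TXY : SupLattice} (t2 : X -> Y -> TXY) {TYX : SupLattice} (s2 : Y -> X -> TYX) :
  is_tensor2 X Y TXY t2 -> is_tensor2 Y X TYX s2 -> morita_pair X Y TXY t2 TYX s2.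
Proof.
  intros HXY HYX.
  exists (mult_quantale H), (mult_quantale H'), (@actX _ _ P Q), (fun x b => actY b x),
    (@actX _ _ Q P), (fun y a => actY a y), (pair_mult P Q), (pair_mult Q P).
  split; [apply (mult_mreg H) |].
  split; [apply (mult_mreg H') |].
  split; [apply (mult_bimod H H') |].
  split; [apply (mult_bimod H' H) |].
  split; [apply (pair_mult_bimorph H) |].
  split; [apply (pair_mult_bimorph H') |].
  split; [intros; apply (pair_mult_actX H) |].
  split; [intros; apply (pair_mult_actY H) |].
  split; [intros; apply (pair_mult_actX H') |].
  split; [intros; apply (pair_mult_actY H') |].
  split; [intros; apply (pair_mult_swap H') |].
  split; [intros; apply (pair_mult_swap H) |].
  split; [intros; reflexivity |].
  split; [intros; reflexivity |].
  split; [apply (pair_mult_surj H HXY) | apply (pair_mult_surj H' HYX)].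
Qed.

Theorem theorem1 (X Y : SupLattice)
    (TXY : SupLattice) (t2 : X -> Y -> TXY) (HXY : is_tensor2 X Y TXY t2)
    (TYX : SupLattice) (s2 : Y -> X -> TYX) (HYX : is_tensor2 Y X TYX s2)
    (TXYX : SupLattice) (t3 : X -> Y -> X -> TXYX) (HXYX : is_tensor3 X Y X TXYX t3)
    (TYXY : SupLattice) (s3 : Y -> X -> Y -> TYXY) (HYXY : is_tensor3 Y X Y TYXY s3) :
  morita_pair X Y TXY t2 TYX s2 <->
  exists (p : TXYX -> X) (q : TYXY -> Y),
    sup_pres p /\ surj p /\ sup_pres q /\ surj q /\
    (forall (x1 x2 x3 : X) (y1 y2 : Y),
        p (t3 (p (t3 x1 y1 x2)) y2 x3) = p (t3 x1 (q (s3 y1 x2 y2)) x3) /\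
        p (t3 x1 (q (s3 y1 x2 y2)) x3) = p (t3 x1 y1 (p (t3 x2 y2 x3)))) /\
    (forall (x1 x2 : X) (y1 y2 y3 : Y),
        q (s3 (q (s3 y1 x1 y2)) x2 y3) = q (s3 y1 (p (t3 x1 y2 x2)) y3) /\
        q (s3 y1 (p (t3 x1 y2 x2)) y3) = q (s3 y1 x1 (q (s3 y2 x2 y3)))) /\
    (forall x1 x2 : X, (forall (u : X) (v : Y), p (t3 u v x1) = p (t3 u v x2)) -> x1 = x2) /\
    (forall x1 x2 : X, (forall (u : X) (v : Y), p (t3 x1 v u) = p (t3 x2 v u)) -> x1 = x2) /\
    (forall y1 y2 : Y, (forall (v : Y) (u : X), q (s3 v u y1) = q (s3 v u y2)) -> y1 = y2) /\
    (forall y1 y2 : Y, (forall (u : X) (v : Y), q (s3 y1 u v) = q (s3 y2 u v)) -> y1 = y2).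
Proof.
  split.
  - intros (A & B & laX & raX & laY & raY & pr & br & _ & _ & HX & HY & Hpr & Hbr &
            prl & prr & brl & brr & _ & _ & idX & idY &
            (hA & hAp & hAt & hAs) & (hB & hBp & hBt & hBs)).
    pose proof (tensor2_image_generated HXY hAp hAs hAt) as pr_gen.
    pose proof (tensor2_image_generated HYX hBp hBs hBt) as br_gen.
    destruct (ternary_map_of_bimodule laX raX pr br HX Hpr pr_gen br_gen idX HXYX)
      as (p & Hp & Hps & pt & sep3 & sep4).
    destruct (ternary_map_of_bimodule laY raY br pr HY Hbr br_gen pr_gen idY HYXY)
      as (q & Hq & Hqs & qt & sep5 & sep6).
    assert (assocX := ternary_assoc_of_morita laX laY raY pr br (proj1 (proj1 HX)) prl prr idY).
    assert (assocY := ternary_assoc_of_morita laY laX raX br pr (proj1 (proj1 HY)) brl brr idX).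
    exists p, q; repeat split; auto; intros; rewrite ?pt, ?qt; first [apply assocX | apply assocY].
  - intros (p & q & Hp & Hps & Hq & Hqs & assocP & assocQ & sep3 & sep4 & sep5 & sep6).
    assert (P_gen := tensor3_image_generated HXYX Hp Hps (fun x y z => eq_refl)).
    assert (Q_gen := tensor3_image_generated HYXY Hq Hqs (fun y x v => eq_refl)).
    assert (P_tri := sup_pres_comp_trimorph Hp (proj1 HXYX)).
    assert (Q_tri := sup_pres_comp_trimorph Hq (proj1 HYXY)).
    apply (morita_pair_of_ternary (P := fun x y z => p (t3 x y z)) (Q := fun y x v => q (s3 y x v)));
      [split | split | exact HXY | exact HYX]; auto.
Qed.
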